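(* Let $p$ be an odd prime, $m$ a positive integer, $q=p^m$. Let $l,e,r,s$ be positive integers such that $l\ge3$ is odd, $s$ is even, $\gcd(l,e)=1$, $l\mid r+es$, and $q-1=ls$. Let $\gamma$ be a primitive element of $\mathbb{F}_q$, $\xi=\gamma^s$, and $A_i=\xi^{ei}+1$ for $0\le i\le l-1$. Then $P(x)=x^r(x^{es}+1)$ is a permutation polynomial of $\mathbb{F}_q$ if and only if all of the following hold: $\gcd(r,s)=1$; $p\mid 2^s-1$; $l\nmid r$; the elements $A_1^s,A_2^s,\dots,A_{l-1}^s$ are pairwise distinct $l$-th roots of unity; and $\mathrm{Ind}_\gamma(A_k)+kr\not\equiv\mathrm{Ind}_\gamma(2)\pmod l$ for all $k=1,\dots,l-1$.
   Context: A permutation polynomial of $\mathbb{F}_q$ is one inducing a bijection of $\mathbb{F}_q$. For nonzero $a\in\mathbb{F}_q$, $\mathrm{Ind}_\gamma(a)$ is the residue class $b\bmod(q-1)$ with $a=\gamma^b$; it has a well-defined residue modulo $l$ since $l\mid q-1$. *)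

From HB Require Import structures.
From mathcomp Require Import all_boot all_order all_algebra all_field.
Set Implicit Arguments. Unset Strict Implicit. Unset Printing Implicit Defensive.
Import GRing.Theory.
Local Open Scope ring_scope.

Definition permutation_poly (F : finFieldType) (P : {poly F}) : Prop :=
  bijective (fun x : F => P.[x]).

(* Ind_gamma(a): the least b in [0, q-1) with gamma^b = a (a representative
   of the residue class mod q-1; for a primitive gamma and a != 0 it exists). *)
Definition Ind (F : finFieldType) (gamma a : F) : nat :=
  find (fun b => gamma ^+ b == a) (iota 0 #|F|.-1).

From HB Require Import structures.
From mathcomp Require Import all_boot all_order all_algebra all_field.
From mathcomp Require Import zify ring.

Set Implicit Arguments.
Unset Strict Implicit.
Unset Printing Implicit Defensive.

Import GRing.Theory.
Local Open Scope ring_scope.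

(* Write q - 1 = l s, so that xi = gamma^s generates the group mu_l of l-th
   roots of unity.  By the criterion of Akbary, Ghioca and Wang, x^r h(x^s)
   permutes F_q iff gcd(r, s) = 1 and y |-> y^r h(y)^s is injective on mu_l.
   For h(y) = y^e + 1 let T(b) be the value of the latter map at xi^b.  Since
   l | r + e s, T(l - i) = A_i^s and T(0) = 2^s, so T is injective iff the A_i^s
   are distinct and differ from 2^s; as T(k) = xi^(k r + Ind A_k) and
   2^s = xi^(Ind 2), the last requirement is the index condition.  If T is
   injective its values exhaust mu_l, whose product is 1 for odd l, while
   prod_i (1 + xi^(e i)) = 2 (evaluate X^l - 1 = prod_i (X - xi^i) at -1)
   makes that product 2^s: hence p | 2^s - 1.  Finally l | r would force
   T(1) = T(l - 1). *)

Lemma expf_card_pred (F : finFieldType) (x : F) : x != 0 -> x ^+ #|F|.-1 = 1.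
Proof.
move=> x_neq0; apply: (mulIf x_neq0).
by rewrite mul1r -exprSr prednK ?expf_card // (ltnW (finNzRing_gt1 F)).
Qed.

Lemma expr_Ind (F : finFieldType) (gamma a : F) :
  #|F|.-1.-primitive_root gamma -> a != 0 -> gamma ^+ Ind gamma a = a.
Proof.
move=> gamma_prim a_neq0.
have [b ->] := prim_rootP gamma_prim (expf_card_pred a_neq0).
have has_b : has (fun c => gamma ^+ c == gamma ^+ b) (iota 0 #|F|.-1).
  by apply/hasP; exists (val b); rewrite ?mem_iota ?ltn_ord.
have := nth_find 0%N has_b; rewrite has_find size_iota in has_b.
by rewrite /Ind nth_iota // => /eqP.
Qed.

Lemma expr_coprime_inv (R : ringType) (r s : nat) : (0 < r)%N -> coprime r s ->
  exists u, forall z : R, z ^+ s = 1 -> (z ^+ r) ^+ u = z.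
Proof.
move=> r_gt0 rs_coprime; case: (egcdnP s r_gt0) => u v Bezout _.
exists u => z zs1; rewrite -exprM mulnC Bezout (eqP rs_coprime).
by rewrite exprD mulnC exprM zs1 expr1n mul1r.
Qed.

Lemma prim_root_mul_exp (R : nzRingType) (l s : nat) (z : R) :
  (l * s).-primitive_root z -> l.-primitive_root (z ^+ s).
Proof.
move=> z_prim; have ls_gt0 := prim_order_gt0 z_prim.
have := dvdn_prim_root z_prim (dvdn_mulr s (dvdnn l)).
by rewrite mulKn //; move: ls_gt0; rewrite muln_gt0 => /andP[].
Qed.

Lemma uniq_map_iotaP (T : eqType) (f : nat -> T) (m n : nat) :
  reflect (forall i j, (m <= i < m + n)%N -> (m <= j < m + n)%N ->
             f i = f j -> i = j)
          (uniq [seq f i | i <- iota m n]).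
Proof.
rewrite -[m]addn0 iotaDl -map_comp addn0.
apply: (iffP (mkseq_uniqP _ _)) => f_inj i j.
  move=> /andP[mi ilt] /andP[mj jlt] fij.
  suff : (i - m = j - m)%N by lia.
  by apply: f_inj; rewrite ?inE /= ?subnKC //; lia.
rewrite !inE /= => ilt jlt /f_inj; lia.
Qed.

Lemma unity_rootX (R : nzRingType) (l k : nat) (y : R) :
  l.-unity_root y -> l.-unity_root (y ^+ k).
Proof. by move=> /unity_rootP yl1; apply/unity_rootP; rewrite exprAC yl1 expr1n. Qed.

Lemma inj_unity_rootsP (R : fieldType) (T : eqType) (l : nat) (z : R)
    (g : R -> T) :
  l.-primitive_root z ->
  {in l.-unity_root &, injective g} <->
  (forall a b, (a < l)%N -> (b < l)%N -> g (z ^+ a) = g (z ^+ b) -> a = b).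
Proof.
move=> z_prim; have z_root k : l.-unity_root (z ^+ k).
  by apply/unity_rootX/unity_rootP; apply: prim_expr_order.
split=> [g_inj a b al bl gab | g_inj u v].
  have /eqP := g_inj _ _ (z_root a) (z_root b) gab.
  by rewrite (eq_prim_root_expr z_prim) !modn_small // => /eqP.
move=> /unity_rootP/(prim_rootP z_prim) [a ->].
move=> /unity_rootP/(prim_rootP z_prim) [b ->].
by move/g_inj => ab; rewrite ab.
Qed.

Lemma prod_inj_unity_roots (R : fieldType) (l : nat) (z : R) (t : nat -> R) :
  l.-primitive_root z -> (forall b, l.-unity_root (t b)) ->
  (forall a b, (a < l)%N -> (b < l)%N -> t a = t b -> a = b) ->
  \prod_(b < l) t b = \prod_(i < l) z ^+ i.
Proof.
move=> z_prim t_root t_inj.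
have t_sigma (b : 'I_l) : {i : 'I_l | t b = z ^+ i}.
  by apply: (prim_rootP z_prim); apply/unity_rootP.
pose sigma b := sval (t_sigma b).
have sigma_inj : injective sigma.
  move=> a b ab; apply/val_inj/t_inj; rewrite ?ltn_ord //.
  by rewrite (svalP (t_sigma a)) (svalP (t_sigma b)) -/(sigma a) ab.
rewrite [RHS](reindex_inj sigma_inj); apply: eq_bigr => b _.
exact: svalP (t_sigma b).
Qed.

Lemma prod_prim_root_exp (R : nzRingType) (l : nat) (z : R) :
  odd l -> l.-primitive_root z -> \prod_(i < l) z ^+ i = 1.
Proof.
move=> l_odd z_prim; rewrite prodrXr -(big_mkord xpredT id) bin2_sum bin2odd //.
by apply/eqP; rewrite -(prim_order_dvd z_prim) dvdn_mulr.
Qed.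

Lemma prod_prim_root_addr1 (R : fieldType) (l : nat) (z : R) :
  odd l -> l.-primitive_root z -> \prod_(i < l) (z ^+ i + 1) = 2%:R.
Proof.
move=> l_odd z_prim.
have := congr1 (horner^~ (-1)) (factor_Xn_sub_1 z_prim).
rewrite horner_prod big_mkord !hornerE -signr_odd l_odd expr1.
under eq_bigr do rewrite hornerXsubC -opprD addrC.
by rewrite prodrN card_ord -signr_odd l_odd expr1 mulN1r -opprD => /oppr_inj.
Qed.

Lemma addr1_neq0_unity_root (R : nzRingType) (l : nat) (y : R) :
  odd l -> 2%:R != 0 :> R -> l.-unity_root y -> y + 1 != 0.
Proof.
move=> l_odd two_neq0 /unity_rootP yl1; move: two_neq0; apply: contra_neq.
move=> /eqP; rewrite addr_eq0 => /eqP y_eq.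
have m1_eq1 : -1 = 1 :> R by move: yl1; rewrite y_eq -signr_odd l_odd expr1.
by rewrite mulr2n -{1}m1_eq1 addNr.
Qed.

Section AGWCriterion.

Variables (F : finFieldType) (r s l : nat) (gamma : F) (h : F -> F).
Hypotheses (cardF : #|F| = (l * s).+1)
           (gamma_prim : (l * s).-primitive_root gamma).
Hypotheses (r_gt0 : (0 < r)%N) (h_neq0 : {in l.-unity_root, forall y, h y != 0}).

Definition xr_h_xs (x : F) := x ^+ r * h (x ^+ s).
Definition xr_h_s (y : F) := y ^+ r * h y ^+ s.

Lemma unity_root_exprs (x : F) : x != 0 -> l.-unity_root (x ^+ s).
Proof.
move=> x_neq0; apply/unity_rootP.
by rewrite -exprM mulnC -[(l * s)%N]/((l * s).+1.-1) -cardF expf_card_pred.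
Qed.

Lemma unity_root_exprsP (y : F) :
  l.-unity_root y -> exists a, y = (gamma ^+ a) ^+ s.
Proof.
move=> /unity_rootP /(prim_rootP (prim_root_mul_exp gamma_prim)) [a ->].
by exists (val a); rewrite exprAC.
Qed.

Let gamma_neq0 : gamma != 0.
Proof. by rewrite (prim_root_eq0 gamma_prim) -lt0n (prim_order_gt0 gamma_prim). Qed.

Lemma xr_h_xs_exprs (x : F) : xr_h_xs x ^+ s = xr_h_s (x ^+ s).
Proof. by rewrite /xr_h_xs /xr_h_s exprMn exprAC. Qed.

Lemma xr_h_xs_mul_root (z x : F) :
  z ^+ s = 1 -> xr_h_xs (z * x) = z ^+ r * xr_h_xs x.
Proof. by move=> zs1; rewrite /xr_h_xs !exprMn zs1 mul1r mulrA. Qed.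

Lemma xr_h_xs0 : xr_h_xs 0 = 0.
Proof. by rewrite /xr_h_xs expr0n gtn_eqF // mul0r. Qed.

Lemma xr_h_xs_neq0 (x : F) : x != 0 -> xr_h_xs x != 0.
Proof.
move=> x_neq0; rewrite mulf_neq0 ?expf_neq0 //.
by apply: h_neq0; apply: unity_root_exprs.
Qed.

Lemma coprime_of_inj_xr_h_xs : injective xr_h_xs -> coprime r s.
Proof.
move=> f_inj; set d := gcdn r s.
have d_dvd : (d %| l * s)%N by rewrite dvdn_mull ?dvdn_gcdr.
have z_prim := dvdn_prim_root gamma_prim d_dvd; set z := gamma ^+ _ in z_prim.
have z_root k : (d %| k)%N -> z ^+ k = 1.
  by move=> d_dvd_k; apply/eqP; rewrite -(prim_order_dvd z_prim).
have z_eq1 : z = 1.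
  by apply: f_inj; rewrite /xr_h_xs !z_root ?dvdn_gcdl ?dvdn_gcdr // !expr1n.
by have := prim_order_dvd z_prim 1; rewrite z_eq1 expr1 eqxx dvdn1.
Qed.

Lemma inj_xr_h_s_of_inj_xr_h_xs :
  injective xr_h_xs -> {in l.-unity_root &, injective xr_h_s}.
Proof.
move=> f_inj _ _ /unity_root_exprsP [a ->] /unity_root_exprsP [b ->].
set x := gamma ^+ a; set y := gamma ^+ b; rewrite -!xr_h_xs_exprs => fs_eq.
have fy_neq0 : xr_h_xs y != 0 by rewrite xr_h_xs_neq0 ?expf_neq0.
have [u inv_r] := expr_coprime_inv F r_gt0 (coprime_of_inj_xr_h_xs f_inj).
pose w := xr_h_xs x / xr_h_xs y.
have ws1 : w ^+ s = 1 by rewrite expr_div_n fs_eq divff ?expf_neq0.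
have wus1 : (w ^+ u) ^+ s = 1 by rewrite exprAC ws1 expr1n.
have : xr_h_xs (w ^+ u * y) = xr_h_xs x.
  by rewrite xr_h_xs_mul_root // exprAC inv_r // divfK.
by move/f_inj <-; rewrite exprMn wus1 mul1r.
Qed.

Lemma inj_xr_h_xs : coprime r s -> {in l.-unity_root &, injective xr_h_s} ->
  injective xr_h_xs.
Proof.
move=> rs_coprime g_inj x y.
have [->|x_neq0] := eqVneq x 0; have [->|y_neq0] := eqVneq y 0 => // f_eq.
- by have := xr_h_xs_neq0 y_neq0; rewrite -f_eq xr_h_xs0 eqxx.
- by have := xr_h_xs_neq0 x_neq0; rewrite f_eq xr_h_xs0 eqxx.
have xs_eq : x ^+ s = y ^+ s.
  apply: g_inj; try exact: unity_root_exprs.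
  by rewrite -!xr_h_xs_exprs f_eq.
have xr_eq : x ^+ r = y ^+ r.
  apply: (mulIf (h_neq0 (unity_root_exprs y_neq0))).
  by move: f_eq; rewrite /xr_h_xs xs_eq.
have [u inv_r] := expr_coprime_inv F r_gt0 rs_coprime.
have xy_s : (x / y) ^+ s = 1 by rewrite expr_div_n xs_eq divff ?expf_neq0.
have xy_r : (x / y) ^+ r = 1 by rewrite expr_div_n xr_eq divff ?expf_neq0.
have := inv_r _ xy_s; rewrite xy_r expr1n => xy_eq1.
by rewrite -(divfK y_neq0 x) -xy_eq1 mul1r.
Qed.

Theorem bijective_xr_h_xsP :
  bijective xr_h_xs <-> coprime r s /\ {in l.-unity_root &, injective xr_h_s}.
Proof.
split=> [/bij_inj f_inj | [rs_coprime g_inj]].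
  by split; [apply: coprime_of_inj_xr_h_xs | apply: inj_xr_h_s_of_inj_xr_h_xs].
by apply: injF_bij; apply: inj_xr_h_xs.
Qed.

End AGWCriterion.

Section Binomial.

Variables (F : finFieldType) (l s r e : nat) (gamma : F).
Hypotheses (cardF : #|F| = (l * s).+1)
           (gamma_prim : (l * s).-primitive_root gamma).
Hypotheses (l_odd : odd l) (l_e_coprime : coprime l e) (l_dvd : (l %| r + e * s)%N).
Hypothesis two_neq0 : 2%:R != 0 :> F.

Local Notation xi := (gamma ^+ s).
Local Notation A i := (xi ^+ (e * i) + 1).
Local Notation h := (fun y : F => y ^+ e + 1).
Local Notation T b := (xr_h_s r s h (xi ^+ b)).
Local Notation T_inj :=
  (forall a b, (a < l)%N -> (b < l)%N -> T a = T b -> a = b).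

Let xi_prim : l.-primitive_root xi := prim_root_mul_exp gamma_prim.

Let gamma_prim_card : #|F|.-1.-primitive_root gamma.
Proof. by rewrite cardF. Qed.

Let xi_expr_dvd k : (l %| k)%N -> xi ^+ k = 1.
Proof. by move=> l_dvd_k; apply/eqP; rewrite -(prim_order_dvd xi_prim). Qed.

Let xi_expr_root k : l.-unity_root (xi ^+ k).
Proof. by apply/unity_rootX/unity_rootP; apply: prim_expr_order. Qed.

Let addr1_expr_neq0 : {in l.-unity_root, forall y, h y != 0}.
Proof.
by move=> y /(unity_rootX e) /(addr1_neq0_unity_root l_odd two_neq0).
Qed.

Let A_neq0 i : A i != 0.
Proof. exact: addr1_neq0_unity_root l_odd two_neq0 (xi_expr_root _). Qed.

Let T_E b : T b = xi ^+ (b * r) * A b ^+ s.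
Proof. by rewrite /xr_h_s -!exprM (mulnC b e). Qed.

Let T0 : T 0 = 2%:R ^+ s.
Proof. by rewrite T_E !muln0 !expr0 mul1r. Qed.

Let T_rev i : (i <= l)%N -> T (l - i) = A i ^+ s.
Proof.
move=> il; rewrite T_E.
have A_rev : A (l - i) = xi ^+ (e * (l - i)) * A i.
  rewrite mulrDr mulr1 -exprD -mulnDr subnK //.
  by rewrite (xi_expr_dvd (dvdn_mull e (dvdnn l))) addrC.
rewrite A_rev exprMn mulrA -(exprM xi) -(exprD xi).
have -> : ((l - i) * r + e * (l - i) * s = (l - i) * (r + e * s))%N by ring.
by rewrite (xi_expr_dvd (dvdn_mull _ l_dvd)) mul1r.
Qed.

Let T_Ind b : T b = xi ^+ (b * r + Ind gamma (A b)).
Proof.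
by rewrite T_E exprD [xi ^+ Ind _ _]exprAC (expr_Ind gamma_prim_card (A_neq0 b)).
Qed.

Let T_eq_T0 k :
  (T k == T 0) = (Ind gamma (A k) + k * r == Ind gamma 2%:R %[mod l])%N.
Proof.
have two_s : 2%:R ^+ s = xi ^+ Ind gamma 2%:R by rewrite exprAC expr_Ind.
by rewrite T_Ind T0 two_s (eq_prim_root_expr xi_prim) addnC.
Qed.

Let T_injP : T_inj <->
  uniq [seq A i ^+ s | i <- iota 1 l.-1] /\
  (forall k, (0 < k < l)%N -> T k != T 0).
Proof.
have l_gt0 := prim_order_gt0 xi_prim.
split=> [T_inj | [/uniq_map_iotaP A_inj T_neq_T0] a b al bl].
  split=> [|k /andP[k_gt0 kl]].
    apply/uniq_map_iotaP => i j /andP[i_gt0 il] /andP[j_gt0 jl] Aij.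
    suff : (l - i = l - j)%N by lia.
    by apply: T_inj; rewrite ?T_rev //; lia.
  by apply/negP => /eqP /(T_inj _ _ kl l_gt0); lia.
have T_pos c : (0 < c < l)%N -> T c = A (l - c) ^+ s.
  by move=> /andP[_ cl]; rewrite -T_rev ?leq_subr // subKn // ltnW.
case: (posnP a) => [->|a_gt0]; case: (posnP b) => [->|b_gt0] // Tab.
- by move: (T_neq_T0 b); rewrite b_gt0 bl Tab eqxx => /(_ isT).
- by move: (T_neq_T0 a); rewrite a_gt0 al Tab eqxx => /(_ isT).
have : (l - a = l - b)%N.
  by apply: A_inj; rewrite -?T_pos ?a_gt0 ?b_gt0 //; lia.
lia.
Qed.

Let T_inj_expr2 : T_inj -> 2%:R ^+ s = 1 :> F.
Proof.
move=> T_inj; have T_root b : l.-unity_root (T b) by rewrite T_Ind.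
have := prod_inj_unity_roots xi_prim T_root T_inj.
rewrite prod_prim_root_exp //; under eq_bigr do rewrite T_E.
rewrite big_split /=.
under eq_bigr do rewrite exprM.
rewrite prodrXl prod_prim_root_exp // expr1n mul1r prodrXl.
under eq_bigr do rewrite exprM.
by rewrite prod_prim_root_addr1 // prim_root_exp_coprime // coprime_sym.
Qed.

Let T_inj_not_dvd_r : (1 < l)%N -> T_inj -> ~~ (l %| r)%N.
Proof.
move=> l_gt1 T_inj; apply/negP => l_dvd_r.
have : (1 = l - 1)%N.
  apply: T_inj => //; first lia.
  by rewrite T_rev 1?ltnW // T_E mul1n (xi_expr_dvd l_dvd_r) mul1r.
move=> l_pred; have l2 : l = 2 by lia.
by move: l_odd; rewrite l2.
Qed.

Theorem permutation_poly_binomialP (p : nat) :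
  p \in [pchar F] -> (0 < r)%N -> (1 < l)%N ->
  permutation_poly ('X^r * ('X^(e * s) + 1) : {poly F}) <->
  [/\ coprime r s, (p %| 2 ^ s - 1)%N, ~~ (l %| r)%N,
      (forall i, (0 < i < l)%N -> l.-unity_root (A i ^+ s))
        /\ uniq [seq A i ^+ s | i <- iota 1 l.-1]
    & forall k, (0 < k < l)%N ->
        (Ind gamma (A k) + k * r != Ind gamma 2%:R %[mod l])%N].
Proof.
move=> pchar_p r_gt0 l_gt1.
have f_eq x : ('X^r * ('X^(e * s) + 1) : {poly F}).[x] = xr_h_xs r s h x.
  by rewrite /xr_h_xs !hornerE -exprM (mulnC s e).
have bij_f : permutation_poly ('X^r * ('X^(e * s) + 1) : {poly F}) <->
             bijective (xr_h_xs r s h).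
  split=> f_bij; first exact: (eq_bij f_bij f_eq).
  exact: (eq_bij f_bij (fun x => esym (f_eq x))).
have g_injP := inj_unity_rootsP (xr_h_s r s h) xi_prim.
have criterion := bijective_xr_h_xsP cardF gamma_prim r_gt0 addr1_expr_neq0.
split=> [/bij_f/criterion [rs_coprime /g_injP T_inj]
        | [rs_coprime _ _ [_ A_uniq] Ind_neq]].
  have [A_uniq T_neq_T0] := T_injP.1 T_inj.
  split=> //.
  - rewrite (dvdn_pcharf pchar_p) natrB ?expn_gt0 // natrX.
    by rewrite T_inj_expr2 // subrr.
  - exact: T_inj_not_dvd_r.
  - by split=> // i _; apply: unity_root_exprs cardF _ (A_neq0 i).
  - by move=> k /T_neq_T0; rewrite T_eq_T0.
apply/bij_f/criterion; split=> //; apply/g_injP/T_injP; split=> // k /Ind_neq.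
by rewrite T_eq_T0.
Qed.

End Binomial.

Theorem theorem4p3 (F : finFieldType) (p m l e r s : nat) (gamma : F) :
  prime p -> odd p -> (0 < m)%N -> #|F| = (p ^ m)%N ->
  (0 < l)%N -> (0 < e)%N -> (0 < r)%N -> (0 < s)%N ->
  (3 <= l)%N -> odd l -> ~~ odd s -> coprime l e ->
  (l %| r + e * s)%N -> (p ^ m - 1 = l * s)%N ->
  (p ^ m - 1)%N.-primitive_root gamma ->
  let xi := gamma ^+ s in
  let A := fun i : nat => xi ^+ (e * i) + 1 in
  permutation_poly ('X^r * ('X^(e * s) + 1) : {poly F}) <->
  [/\ coprime r s,
      (p %| 2 ^ s - 1)%N,
      ~~ (l %| r)%N,
      (forall i : nat, (0 < i < l)%N -> l.-unity_root (A i ^+ s))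
        /\ uniq [seq A i ^+ s | i <- iota 1 l.-1]
    & forall k : nat, (0 < k < l)%N ->
        (Ind gamma (A k) + k * r != Ind gamma (2%:R : F) %[mod l])%N].
Proof.
(* Evenness of s is automatic: q - 1 = l s is even and l is odd. *)
move=> p_prime p_odd _ cardF _ _ r_gt0 _ l_ge3 l_odd _ l_e_coprime l_dvd ls_eq.
rewrite ls_eq => gamma_prim xi A.
have card_ls : #|F| = (l * s).+1.
  by rewrite cardF -ls_eq subn1 prednK // expn_gt0 prime_gt0.
have pchar_p := card_finPcharP cardF p_prime.
have two_neq0 : 2%:R != 0 :> F.
  rewrite -(dvdn_pcharf pchar_p) dvdn_prime2 //.
  by apply: contraL p_odd => /eqP ->.
exact: permutation_poly_binomialP card_ls gamma_prim l_odd l_e_coprime l_dvd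
  two_neq0 _ pchar_p r_gt0 (ltnW l_ge3).
Qed.
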